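(* Let $G$ be a two-step nilpotent group and let $w_1(x,y)$, $w_2(x,y)$ be group words in two letters such that the map $S\colon G^2\to G^2$, $S(x,y)=(w_1(x,y),w_2(x,y))$, is a solution of the Yang--Baxter equation on $G$. Then the map $S^{Ab}\colon(G^{Ab})^2\to(G^{Ab})^2$, $S^{Ab}(x,y)=(w_1(x,y),w_2(x,y))$ (the same words evaluated in the abelianization $G^{Ab}=G/[G,G]$), is a (verbal) solution of the Yang--Baxter equation on $G^{Ab}$.
   Context: For a nonempty set $X$, a map $S\colon X^2\to X^2$ is a solution of the Yang--Baxter equation on $X$ if $S_1S_2S_1=S_2S_1S_2$ as maps $X^3\to X^3$, where $S_1=S\times\mathrm{Id}$ and $S_2=\mathrm{Id}\times S$. A two-step nilpotent group is a group of nilpotency class at most $2$. A solution is verbal if both of its components are given by evaluating group words. *)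

Set Implicit Arguments.

Record Group := {
  carrier :> Type;
  gmul : carrier -> carrier -> carrier;
  gone : carrier;
  ginv : carrier -> carrier;
  gmulA : forall x y z, gmul x (gmul y z) = gmul (gmul x y) z;
  gmul1l : forall x, gmul gone x = x;
  gmul1r : forall x, gmul x gone = x;
  gmulVl : forall x, gmul (ginv x) x = gone;
  gmulVr : forall x, gmul x (ginv x) = gone
}.

Arguments gmul {g}.
Arguments gone {g}.
Arguments ginv {g}.

Definition comm {G : Group} (x y : G) : G :=
  gmul (gmul (ginv x) (ginv y)) (gmul x y).

Definition two_step_nilpotent (G : Group) : Prop :=
  forall x y z : G, gmul (comm x y) z = gmul z (comm x y).

Inductive derived (G : Group) : G -> Prop :=
| derived_comm : forall x y : G, derived G (comm x y)
| derived_one : derived G gone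
| derived_mul : forall a b, derived G a -> derived G b -> derived G (gmul a b)
| derived_inv : forall a, derived G a -> derived G (ginv a).

Definition is_hom (G H : Group) (f : G -> H) : Prop :=
  forall x y : G, f (gmul x y) = gmul (f x) (f y).

(** [pi : G -> A] presents A as the abelianization G^Ab = G/[G,G]:
    pi is a surjective homomorphism whose kernel is exactly [G,G]. *)
Definition abelianization_map (G A : Group) (pi : G -> A) : Prop :=
  is_hom G A pi /\ (forall a : A, exists g : G, pi g = a) /\
  (forall g : G, pi g = gone <-> derived G g).

Inductive word2 : Type :=
| Wx : word2
| Wy : word2
| Wone : word2
| Wmul : word2 -> word2 -> word2
| Winv : word2 -> word2.

Fixpoint eval_word (G : Group) (w : word2) (x y : G) : G :=
  match w with
  | Wx => x
  | Wy => y
  | Wone => gone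
  | Wmul u v => gmul (eval_word G u x y) (eval_word G v x y)
  | Winv u => ginv (eval_word G u x y)
  end.

Definition S_1 {X : Type} (S : X * X -> X * X) (t : X * X * X) : X * X * X :=
  let '(a, b, c) := t in let '(a', b') := S (a, b) in (a', b', c).
Definition S_2 {X : Type} (S : X * X -> X * X) (t : X * X * X) : X * X * X :=
  let '(a, b, c) := t in let '(b', c') := S (b, c) in (a, b', c').

Definition is_YBE_solution {X : Type} (S : X * X -> X * X) : Prop :=
  forall t : X * X * X, S_1 S (S_2 S (S_1 S t)) = S_2 S (S_1 S (S_2 S t)).

Definition verbal_map (G : Group) (w1 w2 : word2) (p : G * G) : G * G :=
  (eval_word G w1 (fst p) (snd p), eval_word G w2 (fst p) (snd p)).


Set Implicit Arguments.

Lemma gmul_cancel_l {G : Group} (a b c : G) : gmul a b = gmul a c -> b = c.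
Proof.
  intro E.
  rewrite <- (gmul1l G b), <- (gmul1l G c), <- (gmulVl G a), <- !gmulA, E.
  reflexivity.
Qed.

Section Homomorphism.

Variables (G H : Group) (f : G -> H).
Hypothesis f_hom : is_hom G H f.

Lemma hom_one : f gone = gone.
Proof.
  apply (gmul_cancel_l (f gone)).
  rewrite <- f_hom, gmul1l, gmul1r; reflexivity.
Qed.

Lemma hom_inv (x : G) : f (ginv x) = ginv (f x).
Proof.
  apply (gmul_cancel_l (f x)).
  rewrite <- f_hom, !gmulVr; exact hom_one.
Qed.

Lemma hom_eval_word (w : word2) (x y : G) :
  f (eval_word G w x y) = eval_word H w (f x) (f y).
Proof.
  induction w as [| | | u IHu v IHv | u IHu]; simpl.
  - reflexivity.
  - reflexivity.
  - exact hom_one.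
  - rewrite f_hom, IHu, IHv; reflexivity.
  - rewrite hom_inv, IHu; reflexivity.
Qed.

End Homomorphism.

Definition map2 {X Y : Type} (f : X -> Y) (p : X * X) : Y * Y :=
  (f (fst p), f (snd p)).

Definition map3 {X Y : Type} (f : X -> Y) (t : X * X * X) : Y * Y * Y :=
  let '(a, b, c) := t in (f a, f b, f c).

Section Intertwining.

Variables (X Y : Type) (f : X -> Y).
Variables (S : X * X -> X * X) (T : Y * Y -> Y * Y).
Hypothesis f_intertwines : forall p, T (map2 f p) = map2 f (S p).

Lemma S_1_map3 (t : X * X * X) : S_1 T (map3 f t) = map3 f (S_1 S t).
Proof.
  destruct t as [[a b] c]; simpl.
  change (f a, f b) with (map2 f (a, b)); rewrite f_intertwines.
  destruct (S (a, b)); reflexivity.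
Qed.

Lemma S_2_map3 (t : X * X * X) : S_2 T (map3 f t) = map3 f (S_2 S t).
Proof.
  destruct t as [[a b] c]; simpl.
  change (f b, f c) with (map2 f (b, c)); rewrite f_intertwines.
  destruct (S (b, c)); reflexivity.
Qed.

Lemma YBE_solution_intertwined_surj :
  (forall y : Y, exists x : X, f x = y) ->
  is_YBE_solution S -> is_YBE_solution T.
Proof.
  intros f_surj S_YBE [[a b] c].
  destruct (f_surj a) as [x <-], (f_surj b) as [y <-], (f_surj c) as [z <-].
  change (f x, f y, f z) with (map3 f (x, y, z)).
  repeat (rewrite S_1_map3 || rewrite S_2_map3).
  rewrite S_YBE; reflexivity.
Qed.

End Intertwining.

Lemma verbal_map_hom (G H : Group) (f : G -> H) (w1 w2 : word2) :
  is_hom G H f ->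
  forall p, verbal_map H w1 w2 (map2 f p) = map2 f (verbal_map G w1 w2 p).
Proof.
  intros f_hom [x y]; unfold verbal_map, map2; simpl.
  rewrite !(hom_eval_word f_hom); reflexivity.
Qed.

Lemma verbal_YBE_solution_hom_image (G H : Group) (f : G -> H) (w1 w2 : word2) :
  is_hom G H f -> (forall h : H, exists g : G, f g = h) ->
  is_YBE_solution (verbal_map G w1 w2) -> is_YBE_solution (verbal_map H w1 w2).
Proof.
  intros f_hom.
  apply YBE_solution_intertwined_surj, verbal_map_hom, f_hom.
Qed.

Theorem proposition5p9 (G : Group) (w1 w2 : word2) :
  two_step_nilpotent G ->
  is_YBE_solution (verbal_map G w1 w2) ->
  forall (GAb : Group) (pi : G -> GAb),
    abelianization_map G GAb pi ->
    is_YBE_solution (verbal_map GAb w1 w2).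
Proof.
  intros _ S_YBE GAb pi [pi_hom [pi_surj _]].
  exact (verbal_YBE_solution_hom_image pi_hom pi_surj S_YBE).
Qed.
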